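(* Let $\mathbf{P}$ be a finite poset, $M,N$ $\mathbf{P}$-modules, and $(\mathbf{Q},f\dashv g,h\dashv i,\Gamma)$ a Galois coupling of $(M,N)$. Then $(\mathrm{Int}\,\overline{\mathbf{Q}},\ \mathrm{Int}\,\overline{f}\dashv\mathrm{Int}\,\overline{g},\ \mathrm{Int}\,\overline{h}\dashv\mathrm{Int}\,\overline{i},\ K(\Gamma))$ is a Galois coupling of $(K(M),K(N))$ (as $\mathrm{Int}\,\overline{\mathbf{P}}$-modules).
   Context: Fix a field $k$; $\mathrm{vect}$ is the category of finite-dimensional $k$-vector spaces. Finite posets are categories with a unique morphism $x\to y$ iff $x\le y$; for a finite poset $\mathbf{S}$, an $\mathbf{S}$-module is a functor $\mathbf{S}\to\mathrm{vect}$; for monotone $g$, $g^*$ is precomposition with $g$. A Galois insertion $f:\mathbf{Q}\rightleftarrows\mathbf{S}:g$ is a pair of monotone maps $f:\mathbf{Q}\to\mathbf{S}$, $g:\mathbf{S}\to\mathbf{Q}$ with $f(u)\le x\iff u\le g(x)$ and $f\circ g=\mathrm{id}_{\mathbf{S}}$. A Galois coupling of a pair $(A,B)$ of $\mathbf{S}$-modules is $(\mathbf{Q},f\dashv g,h\dashv i,\Gamma)$ with $\mathbf{Q}$ a finite poset, $f:\mathbf{Q}\rightleftarrows\mathbf{S}:g$ and $h:\mathbf{Q}\rightleftarrows\mathbf{S}:i$ Galois insertions, and a $\mathbf{Q}$-module $\Gamma$ with $g^*\Gamma\cong A$, $i^*\Gamma\cong B$. For a finite poset $\mathbf{S}$,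 $\overline{\mathbf{S}}=\mathbf{S}\sqcup\{\top\}$ with $s<\top$ for all $s$; for monotone $f$, $\overline{f}$ extends $f$ by $\top\mapsto\top$. $\mathrm{Int}\,\mathbf{S}=\{(x,y)\in\mathbf{S}\times\mathbf{S}\mid x\le y\}$ with product order; $(\mathrm{Int}\,f)(x,y)=(f(x),f(y))$. For an $\mathbf{S}$-module $M$, $\overline{M}$ extends $M$ to $\overline{\mathbf{S}}$ by $\overline{M}(\top)=0$, and $K(M)$ is the $\mathrm{Int}\,\overline{\mathbf{S}}$-module $K(M)((x,y))=\ker\overline{M}(x\le y)$ with structure map for $(x_1,y_1)\le(x_2,y_2)$ the restriction of $\overline{M}(x_1\le x_2)$ (here $K$ is applied both to $\mathbf{P}$-modules and to $\mathbf{Q}$-modules). *)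

From HB Require Import structures.
From mathcomp Require Import all_boot all_algebra.
Set Implicit Arguments. Unset Strict Implicit. Unset Printing Implicit Defensive.
Import GRing.Theory.
Local Open Scope ring_scope.

Record poset := Poset {
  pcar :> finType;
  ple : rel pcar;
  ple_refl : reflexive ple;
  ple_anti : antisymmetric ple;
  ple_trans : transitive ple }.

Definition pmonotone (S T : poset) (f : S -> T) : Prop :=
  forall x y, ple x y -> ple (f x) (f y).

Definition galois_insertion (Q S : poset) (f : Q -> S) (g : S -> Q) : Prop :=
  [/\ pmonotone f, pmonotone g,
      (forall (u : Q) (x : S), ple (f u) x = ple u (g x))
    & (forall x : S, f (g x) = x)].

(** S-modules (functors S -> vect), as data: a dimension for each point and a
    matrix for each pair (row-vector convention: v |-> v *m pmap x y).
    Only the values on pairs x <= y are meaningful. *)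
Record pmod (k : fieldType) (S : poset) := PMod {
  pdim : S -> nat;
  pmap : forall x y : S, 'M[k]_(pdim x, pdim y) }.

Definition is_pmod (k : fieldType) (S : poset) (M : pmod k S) : Prop :=
  (forall x, pmap M x x = 1%:M) /\
  (forall x y z, ple x y -> ple y z -> pmap M x z = pmap M x y *m pmap M y z).

Definition pull (k : fieldType) (S Q : poset) (g : S -> Q) (G : pmod k Q) : pmod k S :=
  @PMod k S (fun x => pdim G (g x)) (fun x y => pmap G (g x) (g y)).

Definition mod_iso (k : fieldType) (S : poset) (A B : pmod k S) : Prop :=
  exists (phi : forall x, 'M[k]_(pdim A x, pdim B x))
         (psi : forall x, 'M[k]_(pdim B x, pdim A x)),
    [/\ (forall x, phi x *m psi x = 1%:M),
        (forall x, psi x *m phi x = 1%:M)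
      & (forall x y, ple x y -> pmap A x y *m phi y = phi x *m pmap B x y)].

Definition galois_coupling (k : fieldType) (S : poset) (A B : pmod k S)
  (Q : poset) (f : Q -> S) (g : S -> Q) (h : Q -> S) (i : S -> Q)
  (Gamma : pmod k Q) : Prop :=
  [/\ is_pmod Gamma, galois_insertion f g, galois_insertion h i,
      mod_iso (pull g Gamma) A & mod_iso (pull i Gamma) B].

Definition ole (S : poset) (a b : option S) : bool :=
  match a, b with
  | _, None => true
  | None, Some _ => false
  | Some x, Some y => ple x y
  end.

Lemma ole_refl (S : poset) : reflexive (@ole S).
Proof. by case=> //= x; apply: ple_refl. Qed.

Lemma ole_anti (S : poset) : antisymmetric (@ole S).
Proof.
by case=> [x|] [y|] //= /andP[h1 h2]; congr Some; apply: ple_anti; rewrite h1 h2.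
Qed.

Lemma ole_trans (S : poset) : transitive (@ole S).
Proof. by case=> [x|] [y|] [z|] //=; apply: ple_trans. Qed.

Definition obar (S : poset) : poset :=
  @Poset (option S) (@ole S) (@ole_refl S) (@ole_anti S) (@ole_trans S).

Definition fbar (S T : poset) (f : S -> T) : obar S -> obar T := omap f.

Definition intv (S : poset) := {p : (S * S)%type | ple p.1 p.2}.

Definition intle (S : poset) (a b : intv S) : bool :=
  ple (val a).1 (val b).1 && ple (val a).2 (val b).2.

Lemma intle_refl (S : poset) : reflexive (@intle S).
Proof. by move=> a; rewrite /intle !ple_refl. Qed.

Lemma intle_anti (S : poset) : antisymmetric (@intle S).
Proof.
move=> [[a1 a2] ha] [[b1 b2] hb] /andP[/andP[h1 h2] /andP[h3 h4]] /=.
apply: val_inj => /=; congr pair; apply: ple_anti; rewrite /= in h1 h2 h3 h4.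
  by rewrite h1 h3.
by rewrite h2 h4.
Qed.

Lemma intle_trans (S : poset) : transitive (@intle S).
Proof.
move=> b a c /andP[h1 h2] /andP[h3 h4]; apply/andP; split.
  exact: ple_trans h1 h3.
exact: ple_trans h2 h4.
Qed.

Definition IntP (S : poset) : poset :=
  @Poset (intv S) (@intle S) (@intle_refl S) (@intle_anti S) (@intle_trans S).

(** (Int f)(x,y) = (f x, f y); for non-monotone f the pair might not be an
    interval, in which case an arbitrary default is used (irrelevant for
    monotone f, the only case used). *)
Definition Int_map (S T : poset) (f : S -> T) (a : IntP S) : IntP T :=
  let x := (val a).1 in let y := (val a).2 in
  insubd (exist (fun p : T * T => ple p.1 p.2) (f x, f x) (ple_refl (f x)))
         (f x, f y).

Definition bdim (k : fieldType) (S : poset) (M : pmod k S) (o : obar S) : nat :=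
  if o is Some x then pdim M x else 0%N.

Definition bmap (k : fieldType) (S : poset) (M : pmod k S) (a b : obar S)
  : 'M[k]_(bdim M a, bdim M b) :=
  match a as a', b as b' return 'M[k]_(bdim M a', bdim M b') with
  | Some x, Some y => pmap M x y
  | _, _ => 0
  end.

Definition Mbar (k : fieldType) (S : poset) (M : pmod k S) : pmod k (obar S) :=
  @PMod k (obar S) (bdim M) (@bmap k S M).

(** K(M): K(M)(x,y) = ker Mbar(x <= y), represented by the basis
    row_base (kermx _) of the kernel {v | v *m Mbar(x<=y) = 0}; the structure
    map is the restriction of Mbar(x1 <= x2), written in these bases. *)
Definition Kdim (k : fieldType) (S : poset) (M : pmod k S) (p : IntP (obar S)) : nat :=
  \rank (kermx (pmap (Mbar M) (val p).1 (val p).2)).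

Definition Kbasis (k : fieldType) (S : poset) (M : pmod k S) (p : IntP (obar S))
  : 'M[k]_(Kdim M p, pdim (Mbar M) (val p).1) :=
  row_base (kermx (pmap (Mbar M) (val p).1 (val p).2)).

Definition Kmap (k : fieldType) (S : poset) (M : pmod k S) (p q : IntP (obar S))
  : 'M[k]_(Kdim M p, Kdim M q) :=
  Kbasis M p *m pmap (Mbar M) (val p).1 (val q).1 *m pinvmx (Kbasis M q).

Definition Kmod (k : fieldType) (S : poset) (M : pmod k S) : pmod k (IntP (obar S)) :=
  @PMod k (IntP (obar S)) (Kdim M) (@Kmap k S M).

(** The kernel construction K is a functor: a natural transformation
    phi : A -> B maps ker A(x <= y) into ker B(x <= y), compatibly with
    composition, so K sends isomorphisms to isomorphisms.  Moreover K commutes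
    with pulling back, (Int g)^* K(A) = K(g^* A) for monotone g, and pulling
    back along gbar commutes with extension by a zero top element.  Hence
    (Int gbar)^* K(Gamma) = K(gbar^* Gammabar) ~ K(Mbar) = K(M), and likewise
    for N.  Galois insertions extend to the added top and pass to intervals
    componentwise. *)

From HB Require Import structures.
From mathcomp Require Import all_boot all_algebra.
Set Implicit Arguments. Unset Strict Implicit. Unset Printing Implicit Defensive.
Import GRing.Theory.
Local Open Scope ring_scope.

Section NaturalIso.
Variables (k : fieldType) (X : poset).

Definition natural (A B : pmod k X) (phi : forall x, 'M[k]_(pdim A x, pdim B x))
  : Prop :=
  forall x y, ple x y -> pmap A x y *m phi y = phi x *m pmap B x y.

Lemma natural_inv (A B : pmod k X) phi psi :
  (forall x, phi x *m psi x = 1%:M) -> (forall x, psi x *m phi x = 1%:M) ->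
  @natural A B phi -> @natural B A psi.
Proof.
move=> phiK psiK nat_phi x y le_xy.
rewrite -[RHS]mulmx1 -(phiK y) mulmxA -(mulmxA (psi x)) nat_phi //.
by rewrite mulmxA psiK mul1mx.
Qed.

Lemma mod_iso_trans (A B C : pmod k X) :
  mod_iso A B -> mod_iso B C -> mod_iso A C.
Proof.
move=> [phi [psi [phiK psiK nat_phi]]] [phi' [psi' [phiK' psiK' nat_phi']]].
exists (fun x => phi x *m phi' x), (fun x => psi' x *m psi x); split.
- by move=> x; rewrite mulmxA -(mulmxA (phi x)) phiK' mulmx1 phiK.
- by move=> x; rewrite mulmxA -(mulmxA (psi' x)) psiK mulmx1 psiK'.
- by move=> x y le_xy; rewrite mulmxA nat_phi // -mulmxA nat_phi' // mulmxA.
Qed.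

End NaturalIso.

Section KernelModule.
Variables (k : fieldType) (X : poset).
Implicit Types A B : pmod k X.

Definition ker_dim A (p : IntP X) : nat :=
  \rank (kermx (pmap A (val p).1 (val p).2)).

Definition ker_basis A (p : IntP X) : 'M[k]_(ker_dim A p, pdim A (val p).1) :=
  row_base (kermx (pmap A (val p).1 (val p).2)).

Definition ker_map A (p q : IntP X) : 'M[k]_(ker_dim A p, ker_dim A q) :=
  ker_basis A p *m pmap A (val p).1 (val q).1 *m pinvmx (ker_basis A q).

Definition ker_mod A : pmod k (IntP X) := PMod (@ker_map A).

Lemma ker_basis_ker A p : ker_basis A p *m pmap A (val p).1 (val p).2 = 0.
Proof. by apply/eqP; rewrite -sub_kermx eq_row_base. Qed.

Lemma sub_ker_basis A p m (v : 'M[k]_(m, pdim A (val p).1)) :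
  v *m pmap A (val p).1 (val p).2 = 0 -> (v <= ker_basis A p)%MS.
Proof. by move=> v_ker; rewrite eq_row_base sub_kermx v_ker. Qed.

Lemma ker_basisK A p : ker_basis A p *m pinvmx (ker_basis A p) = 1%:M.
Proof. by apply: (row_free_inj (row_base_free _)); rewrite mul1mx mulmxKpV. Qed.

Lemma mulmx_pinvK m n l r (u : 'M[k]_(m, n)) (B : 'M[k]_(l, n)) (v : 'M[k]_(n, r)) :
  (u <= B)%MS -> u *m pinvmx B *m (B *m v) = u *m v.
Proof. by move=> sub_uB; rewrite mulmxA mulmxKpV. Qed.

Lemma ker_basis_map_sub A p q : is_pmod A -> intle p q ->
  (ker_basis A p *m pmap A (val p).1 (val q).1 <= ker_basis A q)%MS.
Proof.
move=> [_ A_comp] /andP[le1 le2]; apply: sub_ker_basis.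
rewrite -mulmxA -A_comp ?(valP q) // (A_comp _ (val p).2) ?(valP p) //.
by rewrite mulmxA ker_basis_ker mul0mx.
Qed.

Lemma ker_mod_pmod A : is_pmod A -> is_pmod (ker_mod A).
Proof.
move=> A_mod; split=> [p | p q r le_pq le_qr].
  by rewrite /= /ker_map A_mod.1 mulmx1 ker_basisK.
rewrite /= /ker_map [RHS]mulmxA mulmx_pinvK ?ker_basis_map_sub //.
case/andP: le_pq => le1 _; case/andP: le_qr => le2 _.
by rewrite (A_mod.2 _ (val q).1) // (mulmxA (ker_basis A p)).
Qed.

Definition ker_mx A B (phi : forall x, 'M[k]_(pdim A x, pdim B x)) (p : IntP X)
  : 'M[k]_(ker_dim A p, ker_dim B p) :=
  ker_basis A p *m phi (val p).1 *m pinvmx (ker_basis B p).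

Lemma natural_ker_basis_sub A B phi p : @natural k X A B phi ->
  (ker_basis A p *m phi (val p).1 <= ker_basis B p)%MS.
Proof.
move=> nat_phi; apply: sub_ker_basis.
by rewrite -mulmxA -nat_phi ?(valP p) // mulmxA ker_basis_ker mul0mx.
Qed.

Lemma ker_mx_inv A B phi psi p : @natural k X A B phi ->
  (forall x, phi x *m psi x = 1%:M) -> ker_mx phi p *m ker_mx psi p = 1%:M.
Proof.
move=> nat_phi phiK.
rewrite /ker_mx [LHS]mulmxA mulmx_pinvK ?natural_ker_basis_sub //.
by rewrite -(mulmxA (ker_basis A p)) phiK mulmx1 ker_basisK.
Qed.

Lemma ker_mx_natural A B phi : is_pmod A -> @natural k X A B phi ->
  @natural k (IntP X) (ker_mod A) (ker_mod B) (ker_mx phi).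
Proof.
move=> A_mod nat_phi p q le_pq; case/andP: (le_pq) => le1 _.
rewrite /= /ker_map /ker_mx [LHS]mulmxA [RHS]mulmxA.
rewrite mulmx_pinvK ?ker_basis_map_sub // mulmx_pinvK ?natural_ker_basis_sub //.
by rewrite -(mulmxA (ker_basis A p)) nat_phi // (mulmxA (ker_basis A p)).
Qed.

Lemma ker_mod_iso A B : is_pmod A -> mod_iso A B -> mod_iso (ker_mod A) (ker_mod B).
Proof.
move=> A_mod [phi [psi [phiK psiK nat_phi]]].
exists (ker_mx phi), (ker_mx psi); split=> [p | p |].
- exact: ker_mx_inv.
- exact: (ker_mx_inv _ (natural_inv phiK psiK nat_phi)).
- exact: ker_mx_natural.
Qed.

End KernelModule.

Section Pullback.
Variables (k : fieldType) (X Y : poset).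

Lemma pull_pmod (G : Y -> X) (A : pmod k X) :
  pmonotone G -> is_pmod A -> is_pmod (pull G A).
Proof.
move=> mG [A_id A_comp]; split=> [y | x y z le_xy le_yz] /=; first exact: A_id.
by apply: A_comp; apply: mG.
Qed.

(* Using the structure maps A(r1 y <= r2 y) avoids transport along r1 y = r2 y. *)
Lemma mod_iso_pull_eq (r1 r2 : Y -> X) (A : pmod k X) :
  is_pmod A -> pmonotone r1 -> (forall y, r1 y = r2 y) ->
  mod_iso (pull r1 A) (pull r2 A).
Proof.
move=> [A_id A_comp] m1 r12.
have le12 y : ple (r1 y) (r2 y) by rewrite r12 ple_refl.
have le21 y : ple (r2 y) (r1 y) by rewrite r12 ple_refl.
exists (fun y => pmap A (r1 y) (r2 y)), (fun y => pmap A (r2 y) (r1 y)).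
by split=> [y | y | x y le_xy] /=; rewrite -?A_comp ?A_id // -?r12 m1.
Qed.

Definition Int_mono (G : Y -> X) (mG : pmonotone G) (p : IntP Y) : IntP X :=
  exist (fun q : X * X => ple q.1 q.2) (G (val p).1, G (val p).2) (mG _ _ (valP p)).

Lemma Int_mapE (G : Y -> X) (mG : pmonotone G) p : Int_map G p = Int_mono mG p.
Proof. by apply: val_inj; rewrite /Int_map insubdK //; apply/mG/(valP p). Qed.

Lemma ker_mod_pull (G : Y -> X) (mG : pmonotone G) (A : pmod k X) :
  ker_mod (pull G A) = pull (Int_mono mG) (ker_mod A).
Proof. by []. Qed.

Lemma Int_map_monotone (G : Y -> X) : pmonotone G -> pmonotone (Int_map G).
Proof.
move=> mG p q /andP[le1 le2]; rewrite !(Int_mapE mG).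
by apply/andP; split; apply: mG.
Qed.

End Pullback.

Lemma Int_gi (Q S : poset) (F : Q -> S) (G : S -> Q) :
  galois_insertion F G -> galois_insertion (Int_map F) (Int_map G).
Proof.
case=> mF mG adj FGK; split; try exact: Int_map_monotone.
  by move=> u x; rewrite /= /intle (Int_mapE mF) (Int_mapE mG) /= !adj.
move=> x; apply: val_inj; rewrite (Int_mapE mG) (Int_mapE mF) /= !FGK.
by case: (val x).
Qed.

Lemma fbar_monotone (S T : poset) (F : S -> T) :
  pmonotone F -> pmonotone (fbar F : obar S -> obar T).
Proof. by move=> mF [x|] [y|] //=; apply: mF. Qed.

Lemma fbar_gi (Q S : poset) (F : Q -> S) (G : S -> Q) :
  galois_insertion F G -> galois_insertion (fbar F : obar Q -> obar S) (fbar G).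
Proof.
case=> mF mG adj FGK; split; try exact: fbar_monotone.
  by case=> [u|] [x|] //=.
by case=> [x|] //=; rewrite FGK.
Qed.

Section Extension.
Variables (k : fieldType) (X : poset).

Lemma Mbar_pmod (A : pmod k X) : is_pmod A -> is_pmod (Mbar A).
Proof.
move=> [A_id A_comp]; split=> [[x|] | [x|] [y|] [z|]] //=;
  by [exact: A_id | exact: A_comp | rewrite thinmx0].
Qed.

Lemma Mbar_pull_iso (Y : poset) (G : X -> Y) (A : pmod k Y) (B : pmod k X) :
  mod_iso (pull G A) B -> mod_iso (pull (fbar G) (Mbar A)) (Mbar B).
Proof.
move=> [phi [psi [phiK psiK nat_phi]]].
exists (fun o => match o as o' return 'M[k]_(bdim A (fbar G o'), bdim B o') with
                 | Some x => phi x | None => 0 end).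
exists (fun o => match o as o' return 'M[k]_(bdim B o', bdim A (fbar G o')) with
                 | Some x => psi x | None => 0 end).
by split=> [[x|] | [x|] | [x|] [y|]] //=; rewrite ?thinmx0 ?phiK ?psiK //; apply: nat_phi.
Qed.

End Extension.

Lemma Kmod_pull_iso (k : fieldType) (P Q : poset) (M : pmod k P)
  (Gamma : pmod k Q) (g : P -> Q) :
  is_pmod Gamma -> pmonotone g -> mod_iso (pull g Gamma) M ->
  mod_iso (pull (Int_map (fbar g)) (Kmod Gamma)) (Kmod M).
Proof.
move=> Gamma_mod mg iso_gM.
have mgbar := fbar_monotone mg.
have Gammabar_mod := Mbar_pmod Gamma_mod.
apply: (@mod_iso_trans _ _ _ (pull (Int_mono mgbar) (ker_mod (Mbar Gamma)))).
  apply: mod_iso_pull_eq; first exact: ker_mod_pmod.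
    exact: Int_map_monotone.
  exact: Int_mapE.
rewrite -ker_mod_pull; apply: ker_mod_iso; first exact: pull_pmod.
exact: Mbar_pull_iso.
Qed.

Theorem lemma6p11 (k : fieldType) (P : poset) (M N : pmod k P)
  (Q : poset) (f : Q -> P) (g : P -> Q) (h : Q -> P) (i : P -> Q)
  (Gamma : pmod k Q) :
  is_pmod M -> is_pmod N ->
  galois_coupling M N f g h i Gamma ->
  galois_coupling (Kmod M) (Kmod N)
    (Int_map (fbar f)) (Int_map (fbar g))
    (Int_map (fbar h)) (Int_map (fbar i))
    (Kmod Gamma).
Proof.
(* Functoriality of M and N is implied by the isomorphisms with pullbacks of Gamma. *)
move=> _ _ [Gamma_mod gi_fg gi_hi iso_gM iso_iN].
have [_ mg _ _] := gi_fg; have [_ mi _ _] := gi_hi.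
split.
- exact: ker_mod_pmod (Mbar_pmod Gamma_mod).
- exact: Int_gi (fbar_gi gi_fg).
- exact: Int_gi (fbar_gi gi_hi).
- exact: Kmod_pull_iso Gamma_mod mg iso_gM.
- exact: Kmod_pull_iso Gamma_mod mi iso_iN.
Qed.
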